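(* Let $q$ be a prime power and $1\le d\le e$ integers, and assume $q\ge 3$, or $q=2$ and $d\neq e$. Then for all $0\le i\le d$ and $0\le j\le d$, with $h_{\max}=\min\{j,d-i\}$, $$|T_{h_{\max}}(i,j)|-|T_{h_{\max}-1}(i,j)|\le |B_j(i)|\le |T_{h_{\max}}(i,j)|,$$ and the sign of $B_j(i)$ is $(-1)^{\max(0,\,j+i-d)}$.
   Context: For integers $m\ge 0$ and $l$, ${m\brack l}=\prod_{t=1}^{l}\frac{q^{m-t+1}-1}{q^t-1}$ for $l\ge0$ and $0$ for $l<0$. For $0\le i,j\le d$, $$B_j(i)=\sum_{h=0}^{\min\{j,d-i\}}(-1)^{j-h}q^{eh+\binom{j-h}{2}}{d-h\brack d-j}{d-i\brack h};$$ these are the eigenvalues of the bilinear forms graph $H_q(d,e,j)$ (vertices: $d\times e$ matrices over $\mathbb F_q$, adjacent iff their difference has rank $j$). $T_h(i,j)$ denotes the $h$-th summand for $0\le h\le\min\{j,d-i\}$, and $T_{-1}(i,j)=0$. *)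

From mathcomp Require Import all_boot all_order all_algebra.
Set Implicit Arguments. Unset Strict Implicit. Unset Printing Implicit Defensive.
Import Order.TTheory GRing.Theory Num.Theory.
Local Open Scope ring_scope.

(* The exponent m-t+1 is written (m.+1 - t)%N; for t > m+1 the truncated value
   is 0, but then the factor at t = m+1 is already 0, so the product agrees. *)
Definition gbin (q : nat) (m l : nat) : rat :=
  \prod_(1 <= t < l.+1) ((q%:R ^+ (m.+1 - t) - 1) / (q%:R ^+ t - 1)).

Definition Tterm (q d e i j h : nat) : rat :=
  (-1) ^+ (j - h) * (q%:R) ^+ (e * h + 'C(j - h, 2))
  * gbin q (d - h) (d - j) * gbin q (d - i) h.

Definition Tprev (q d e i j h : nat) : rat :=
  if h is h'.+1 then Tterm q d e i j h' else 0.

Definition Beig (q d e i j : nat) : rat :=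
  \sum_(0 <= h < (minn j (d - i)).+1) Tterm q d e i j h.

Definition prime_power (q : nat) : Prop :=
  exists p k : nat, prime p /\ (0 < k)%N /\ q = (p ^ k)%N.

From mathcomp Require Import all_boot all_order all_algebra.
From mathcomp Require Import zify ring lra.
Set Implicit Arguments. Unset Strict Implicit. Unset Printing Implicit Defensive.
Import Order.TTheory GRing.Theory Num.Theory.
Local Open Scope ring_scope.

(* Write T_h(i,j) = (-1)^(j-h) * M_h with the magnitude M_h > 0, and put
   H = min(j, d-i).  Then B_j(i) = (-1)^(j-H) * S_H, where
   S_H = sum_(h <= H) (-1)^(H-h) M_h is an alternating sum ending with +M_H.
   The whole lemma follows from two facts:
   - an alternating sum of a positive, strictly increasing sequence satisfies
     M_H - M_(H-1) <= S_H <= M_H and S_H > 0 (generic, over any real domain);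
   - the magnitudes are strictly increasing in h.  Cross-multiplying the two
     absorption identities of Gaussian binomials gives the exact relation
       M_(k+1) * q^(j-k-1)(q^(d-k)-1)(q^(k+1)-1) = M_k * q^e(q^(j-k)-1)(q^(d-i-k)-1),
     and the right factor dominates the left one as soon as
     q^(d+1) <= q^e (q-1)^2, which is exactly what the hypothesis
     "q >= 3, or q = 2 and d < e" guarantees.
   The sign of B_j(i) is then (-1)^(j-H) = (-1)^(max(0, j+i-d)). *)

Section AlternatingSums.
Variable R : realDomainType.

Definition alt_sum (A : nat -> R) (H : nat) : R :=
  \sum_(0 <= h < H.+1) (-1) ^+ (H - h) * A h.

Definition prev_term (A : nat -> R) (H : nat) : R :=
  if H is k.+1 then A k else 0.

Variable A : nat -> R.

Lemma alt_sum0 : alt_sum A 0 = A 0%N.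
Proof. by rewrite /alt_sum big_nat1 expr0 mul1r. Qed.

Lemma alt_sumS (H : nat) : alt_sum A H.+1 = A H.+1 - alt_sum A H.
Proof.
rewrite /alt_sum big_nat_recr //= subnn expr0 mul1r addrC; congr (_ + _).
rewrite -sumrN; apply: eq_big_nat => h /andP[_ h_le].
by rewrite subSn // exprS mulN1r mulNr.
Qed.

Lemma alt_sum_bounds (H : nat) :
  (forall k, (k < H)%N -> A k <= A k.+1) -> 0 <= A 0%N ->
  0 <= alt_sum A H <= A H.
Proof.
move=> nondecrA A0; elim: H nondecrA => [|H IH] nondecrA; first by rewrite alt_sum0 A0 lexx.
have /andP[S_ge0 S_le] := IH (fun k hk => nondecrA k (ltnW hk)).
have := nondecrA H (ltnSn H); rewrite alt_sumS => A_le.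
by apply/andP; split; lra.
Qed.

Lemma alt_sum_lower (H : nat) :
  (forall k, (k < H)%N -> A k <= A k.+1) -> 0 <= A 0%N ->
  A H - prev_term A H <= alt_sum A H.
Proof.
case: H => [|k] nondecrA A0 /=; first by rewrite alt_sum0 subr0.
have /andP[_ S_le] := alt_sum_bounds (fun l hl => nondecrA l (ltnW hl)) A0.
by rewrite alt_sumS lerD2l lerN2.
Qed.

Lemma alt_sum_gt0 (H : nat) :
  (forall k, (k < H)%N -> A k < A k.+1) -> 0 < A 0%N -> 0 < alt_sum A H.
Proof.
move=> incrA A0.
have := alt_sum_lower (fun k hk => ltW (incrA k hk)) (ltW A0).
case: H incrA => [|k] incrA /=; first by rewrite subr0; apply: lt_le_trans.
by apply: lt_le_trans; rewrite subr_gt0 incrA.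
Qed.

End AlternatingSums.

Section GaussianBinomials.
Variable q : nat.
Hypothesis q_ge2 : (2 <= q)%N.
Local Notation x := (q%:R : rat).

Lemma base_gt1 : 1 < x.
Proof. by rewrite (ltr_nat _ 1 q). Qed.

Lemma qpow_sub1_gt0 (n : nat) : (0 < n)%N -> 0 < x ^+ n - 1.
Proof. by move=> n_gt0; rewrite subr_gt0 exprn_egt1 ?base_gt1 // -lt0n. Qed.

Lemma gbin0 (m : nat) : gbin q m 0 = 1.
Proof. by rewrite /gbin big_geq. Qed.

Lemma gbinS (m l : nat) :
  gbin q m l.+1 = gbin q m l * ((x ^+ (m.+1 - l.+1) - 1) / (x ^+ l.+1 - 1)).
Proof. by rewrite /gbin big_nat_recr. Qed.

Lemma gbin_gt0 (m l : nat) : (l <= m)%N -> 0 < gbin q m l.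
Proof.
move=> l_le_m; rewrite /gbin big_nat_cond.
apply: prodr_gt0 => t /andP[/andP[t_ge1 t_le] _].
by apply: divr_gt0; apply: qpow_sub1_gt0; lia.
Qed.

Lemma gbin_absorb_top (m l : nat) : (l <= m)%N ->
  gbin q m.+1 l * (x ^+ (m.+1 - l) - 1) = gbin q m l * (x ^+ m.+1 - 1).
Proof.
elim: l => [|l IH] l_le_m; first by rewrite !gbin0 subn0.
rewrite !gbinS (_ : (m.+2 - l.+1 = m.+1 - l)%N); last by lia.
rewrite (_ : (m.+1 - l.+1 = m - l)%N); last by lia.
transitivity ((gbin q m.+1 l * (x ^+ (m.+1 - l) - 1))
              * ((x ^+ (m - l) - 1) / (x ^+ l.+1 - 1))); first by ring.
by rewrite IH; [ring | lia].
Qed.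

Lemma gbin_absorb_bottom (n k : nat) :
  gbin q n k.+1 * (x ^+ k.+1 - 1) = gbin q n k * (x ^+ (n - k) - 1).
Proof.
have nz : x ^+ k.+1 - 1 != 0 by rewrite gt_eqF // qpow_sub1_gt0.
by rewrite gbinS (_ : (n.+1 - k.+1 = n - k)%N) ?subSS // -!mulrA mulVf // mulr1.
Qed.

End GaussianBinomials.

Lemma power_product_lt (R : realFieldType) (y : R) (a b c k e : nat) : 1 < y ->
  y ^+ (c + k + 2) <= y ^+ e * (y - 1) ^+ 2 ->
  y ^+ a * (y ^+ c.+1 - 1) * (y ^+ k.+1 - 1) < y ^+ e * (y ^+ a.+1 - 1) * (y ^+ b.+1 - 1).
Proof.
move=> y_gt1 margin.
have ya : 1 <= y ^+ a by rewrite exprn_ege1 // ltW.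
have y_le n : y <= y ^+ n.+1 by rewrite -{1}(expr1 y) ler_weXn2l ?ltW.
have yc := y_le c; have yk := y_le k; have yb := y_le b.
have ye : 0 < y ^+ e by rewrite exprn_gt0 // (lt_trans ltr01).
have split_exp : y ^+ (c + k + 2) = y ^+ c.+1 * y ^+ k.+1.
  by rewrite -exprD; congr (_ ^+ _); lia.
have lhs_lt : y ^+ a * (y ^+ c.+1 - 1) * (y ^+ k.+1 - 1) < y ^+ a * y ^+ (c + k + 2).
  by rewrite -mulrA ltr_pM2l ?split_exp; [nra | lra].
have ya1 : y ^+ a * (y - 1) <= y ^+ a.+1 - 1 by rewrite exprSr; nra.
have rhs_ge : y ^+ a * (y ^+ e * (y - 1) ^+ 2)
              <= y ^+ e * (y ^+ a.+1 - 1) * (y ^+ b.+1 - 1).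
  rewrite (_ : y ^+ a * _ = y ^+ e * (y ^+ a * (y - 1)) * (y - 1)); last by ring.
  apply: ler_pM; [by apply: mulr_ge0; nra | lra | by rewrite ler_pM2l | lra].
have mid : y ^+ a * y ^+ (c + k + 2) <= y ^+ a * (y ^+ e * (y - 1) ^+ 2).
  by rewrite ler_pM2l //; lra.
lra.
Qed.

Lemma power_margin (q d e : nat) : (d <= e)%N ->
  (3 <= q)%N \/ (q = 2%N /\ d <> e) ->
  (q%:R : rat) ^+ (d + 1) <= (q%:R : rat) ^+ e * (q%:R - 1) ^+ 2.
Proof.
move=> d_le_e [q_ge3|[-> d_ne_e]].
- have x_ge3 : (3 : rat) <= q%:R by rewrite (ler_nat _ 3 q).
  have xd_le : (q%:R : rat) ^+ d <= q%:R ^+ e by rewrite ler_eXn2l //; lra.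
  have xd_ge0 : 0 <= (q%:R : rat) ^+ d by rewrite exprn_ge0 //; lra.
  have xe_gt0 : 0 < (q%:R : rat) ^+ e by rewrite exprn_gt0 //; lra.
  have x_le_sq : (q%:R : rat) <= (q%:R - 1) ^+ 2 by rewrite expr2; nra.
  rewrite exprD expr1; apply: (@le_trans _ _ ((q%:R : rat) ^+ e * q%:R)).
    by rewrite ler_pM2r //; lra.
  by rewrite ler_pM2l.
- have -> : ((2%:R : rat) - 1) ^+ 2 = 1 by rewrite expr2; lra.
  by rewrite mulr1 ler_eXn2l ?(ltr_nat _ 1 2) //; lia.
Qed.

Definition Tmag (q d e i j h : nat) : rat :=
  (q%:R) ^+ (e * h + 'C(j - h, 2)) * gbin q (d - h) (d - j) * gbin q (d - i) h.

Lemma Tterm_sign (q d e i j h : nat) :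
  Tterm q d e i j h = (-1) ^+ (j - h) * Tmag q d e i j h.
Proof. by rewrite /Tterm /Tmag !mulrA. Qed.

Lemma Tmag_gt0 (q d e i j h : nat) : (2 <= q)%N ->
  (h <= j)%N -> (h <= d - i)%N -> 0 < Tmag q d e i j h.
Proof.
move=> q_ge2 h_le_j h_le_di; rewrite /Tmag.
have gbin_pos m l : (l <= m)%N -> 0 < gbin q m l by exact: gbin_gt0.
by rewrite !mulr_gt0 ?exprn_gt0 ?(ltr_nat _ 0 q) ?gbin_pos //; lia.
Qed.

Lemma Tmag_ratio (q d e i j k : nat) : (2 <= q)%N -> (j <= d)%N ->
  (k < j)%N -> (k < d - i)%N ->
  Tmag q d e i j k.+1
    * ((q%:R : rat) ^+ (j - k.+1) * (q%:R ^+ (d - k) - 1) * (q%:R ^+ k.+1 - 1))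
  = Tmag q d e i j k
    * ((q%:R : rat) ^+ e * (q%:R ^+ (j - k) - 1) * (q%:R ^+ (d - i - k) - 1)).
Proof.
move=> q_ge2 j_le_d k_lt_j k_lt_di; rewrite /Tmag.
set x : rat := q%:R; set m := (d - k.+1)%N; set a := (j - k.+1)%N.
set E := (e * k + 'C(a, 2))%N.
have d_k : (d - k = m.+1)%N by rewrite /m; lia.
have j_k : (j - k = a.+1)%N by rewrite /a; lia.
have expk : (e * k + 'C(j - k, 2) = E + a)%N by rewrite j_k binS bin1 /E addnA.
have expk1 : (e * k.+1 + 'C(j - k.+1, 2) = E + e)%N by rewrite /E -/a mulnS; lia.
have top := gbin_absorb_top q_ge2 (_ : (d - j <= m)%N).
rewrite (_ : (m.+1 - (d - j) = j - k)%N) in top; last by rewrite /m; lia.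
have bottom := gbin_absorb_bottom q_ge2 (d - i) k.
rewrite d_k expk expk1 (exprD x E a) (exprD x E e).
transitivity (x ^+ E * x ^+ e * x ^+ a * (gbin q m (d - j) * (x ^+ m.+1 - 1))
              * (gbin q (d - i) k.+1 * (x ^+ k.+1 - 1))); first by ring.
by rewrite -top ?bottom; [ring | rewrite /m; lia].
Qed.

Lemma Tmag_increasing (q d e i j k : nat) : (2 <= q)%N ->
  (3 <= q)%N \/ (q = 2%N /\ d <> e) -> (d <= e)%N -> (j <= d)%N ->
  (k < j)%N -> (k < d - i)%N ->
  Tmag q d e i j k < Tmag q d e i j k.+1.
Proof.
move=> q_ge2 hyp d_le_e j_le_d k_lt_j k_lt_di.
have ratio := Tmag_ratio e q_ge2 j_le_d k_lt_j k_lt_di.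
set x : rat := q%:R in ratio; set L := (_ * _ * _) in ratio; set R := (_ * _ * _) in ratio.
have x_gt1 : 1 < x := base_gt1 q_ge2.
have L_gt0 : 0 < L.
  by rewrite /L !mulr_gt0 ?exprn_gt0 ?(qpow_sub1_gt0 q_ge2) //; [lra | lia].
have L_lt_R : L < R.
  rewrite /L /R (_ : (d - k = (d - k.+1).+1)%N); last by lia.
  rewrite (_ : (j - k = (j - k.+1).+1)%N); last by lia.
  rewrite (_ : (d - i - k = (d - i - k.+1).+1)%N); last by lia.
  apply: power_product_lt => //.
  by rewrite (_ : (d - k.+1 + k + 2 = d + 1)%N); [exact: power_margin | lia].
rewrite -(ltr_pM2r L_gt0) ratio ltr_pM2l //.
by apply: Tmag_gt0; lia.
Qed.

Lemma Beig_alt_sum (q d e i j : nat) :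
  Beig q d e i j
  = (-1) ^+ (j - minn j (d - i)) * alt_sum (Tmag q d e i j) (minn j (d - i)).
Proof.
rewrite /Beig /alt_sum mulr_sumr; apply: eq_big_nat => h /andP[_ h_le].
by rewrite Tterm_sign mulrA -exprD; congr (_ ^+ _ * _); lia.
Qed.

Theorem lemma4p1 (q d e : nat) (Hq : prime_power q)
  (Hd : (1 <= d)%N) (Hde : (d <= e)%N)
  (Hq3 : (3 <= q)%N \/ (q = 2%N /\ d <> e))
  (i j : nat) (Hi : (i <= d)%N) (Hj : (j <= d)%N) :
  let hmax := minn j (d - i) in
  `|Tterm q d e i j hmax| - `|Tprev q d e i j hmax| <= `|Beig q d e i j|
  /\ `|Beig q d e i j| <= `|Tterm q d e i j hmax|
  /\ Num.sg (Beig q d e i j) = (-1) ^+ (maxn 0 (j + i - d)).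
Proof.
move=> H; have q_ge2 : (2 <= q)%N by case: Hq3 => [|[->]]; lia.
set M := Tmag q d e i j.
have normT h : (h <= H)%N -> `|Tterm q d e i j h| = M h.
  move=> h_le; rewrite Tterm_sign normrM normr_sign mul1r gtr0_norm //.
  by apply: Tmag_gt0; lia.
have normTprev : `|Tprev q d e i j H| = prev_term M H.
  by case: H normT => [|k] normT /=; rewrite ?normr0 ?normT.
have incrM k : (k < H)%N -> M k < M k.+1.
  by move=> k_lt; apply: Tmag_increasing => //; lia.
have M0 : 0 < M 0%N by apply: Tmag_gt0.
have S_gt0 := alt_sum_gt0 incrM M0.
have normB : `|Beig q d e i j| = alt_sum M H.
  by rewrite Beig_alt_sum normrM normr_sign mul1r gtr0_norm.
have nondecrM k (k_lt : (k < H)%N) := ltW (incrM k k_lt).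
have /andP[_ S_le] := alt_sum_bounds nondecrM (ltW M0).
rewrite normB normT // normTprev; split; first exact: alt_sum_lower nondecrM (ltW M0).
split=> //; rewrite Beig_alt_sum sgrM sgrX sgrN1 gtr0_sg // mulr1.
by congr (_ ^+ _); lia.
Qed.
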